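(* Let $n \ge 1$ and let $X_1,\dots,X_n$ be observations from $\mathcal{N}(\mu,1)$ with sample mean $\bar x$, and let $z=\sqrt{n}\,\bar x$. For a prior variance $\tau^2>0$ define the Bayes factor \[ \mathrm{BF}_{01}(\bar x;\tau^2) = \sqrt{1+n\tau^2}\,\exp\left\{-\frac{z^2}{2}\cdot\frac{n\tau^2}{1+n\tau^2}\right\}. \] Suppose the result is two-sided statistically significant at level $\alpha = 0.05$, i.e. $|z| > 1.96$. Let $\tau^{*2} = k^*/n$, where $k^*$ is the unique $k>0$ with $(1+k)\ln(1+k) = z^2 k$. Then there exist prior variances $\tau_1^2 < \tau^{*2} < \tau_2^2$ such that $\mathrm{BF}_{01}(\bar x;\tau_1^2) < 1$ and $\mathrm{BF}_{01}(\bar x;\tau_2^2) > 1$.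
   Context: Model: testing $H_0:\mu=0$ versus $H_1:\mu\neq0$ in the normal model with known variance $\sigma^2=1$, with prior probability $1/2$ on $H_0$ and prior $\mu\mid H_1\sim\mathcal{N}(0,\tau^2)$. $\mathrm{BF}_{01}$ is the Bayes factor in favour of $H_0$; $\mathrm{BF}_{01}<1$ is interpreted as concluding in favour of $H_1$ and $\mathrm{BF}_{01}>1$ as concluding in favour of $H_0$. The quantity $\tau^{*2}$ is the critical prior variance (flip point divided by $n$). *)

From Stdlib Require Import Reals.
Open Scope R_scope.

Definition zstat (n : nat) (xbar : R) : R := sqrt (INR n) * xbar.

(* Bayes factor BF_01(xbar; tau2) for H0: mu = 0 vs H1: mu ~ N(0, tau2). *)
Definition BF01 (n : nat) (xbar tau2 : R) : R :=
  let z := zstat n xbar in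
  sqrt (1 + INR n * tau2) *
  exp (- (z ^ 2 / 2) * (INR n * tau2 / (1 + INR n * tau2))).

Definition flip_eq (z k : R) : Prop := (1 + k) * ln (1 + k) = z ^ 2 * k.

(** Substituting [k = n tau2] gives
    [BF01 = exp ((ln (1 + k) - z^2 k / (1 + k)) / 2)], so [BF01 < 1] exactly when
    [(1 + k) ln (1 + k) / k < z^2].  The left-hand side is strictly increasing in [k]
    and equals [z^2] at the flip point [k*], hence the Bayes factor favours [H1] for
    every [k < k*] and [H0] for every [k > k*]; take [k*/2] and [2 k*]. *)
From Stdlib Require Import Reals Lra Lia.
Open Scope R_scope.

Lemma ln_lt_sub_1 x : 0 < x -> x <> 1 -> ln x < x - 1.
Proof.
  intros Hx Hx1.
  pose proof (exp_ineq1 (ln x) (ln_neq_0 x Hx1 Hx)) as H.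
  rewrite exp_ln in H by exact Hx.
  lra.
Qed.

Lemma ln_1p_lt k : 0 < k -> ln (1 + k) < k.
Proof.
  intros Hk.
  pose proof (ln_lt_sub_1 (1 + k) ltac:(lra) ltac:(lra)).
  lra.
Qed.

Lemma ln_sub_ln_gt a b : 0 < a -> a < b -> (b - a) / b < ln b - ln a.
Proof.
  intros Ha Hab.
  assert (Hq : a / b <> 1).
  { intro E. assert (a = b) by (rewrite <- (Rmult_1_l b), <- E; field; lra). lra. }
  pose proof (ln_lt_sub_1 (a / b) ltac:(apply Rdiv_lt_0_compat; lra) Hq) as H.
  unfold Rdiv in H. rewrite ln_mult, ln_Rinv in H by (try apply Rinv_0_lt_compat; lra).
  replace ((b - a) / b) with (1 - a * / b) by (field; lra).
  lra.
Qed.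

Lemma xlnx_1p_div_increasing a b : 0 < a -> a < b ->
  (1 + a) * ln (1 + a) / a < (1 + b) * ln (1 + b) / b.
Proof.
  intros Ha Hab.
  pose proof (ln_sub_ln_gt (1 + a) (1 + b) ltac:(lra) ltac:(lra)) as Hgap.
  pose proof (ln_1p_lt a Ha) as Hla.
  assert (Hgap' : b - a < (1 + b) * (ln (1 + b) - ln (1 + a))).
  { replace (b - a) with ((1 + b) * (((1 + b) - (1 + a)) / (1 + b))) at 1 by (field; lra).
    apply Rmult_lt_compat_l; lra. }
  (* [a (1+b) ln(1+b) - b (1+a) ln(1+a) = a (1+b) (ln(1+b) - ln(1+a)) - (b-a) ln(1+a)],
     and the two bounds make this exceed [a (b-a) - (b-a) a = 0]. *)
  assert (Hcross : b * ((1 + a) * ln (1 + a)) < a * ((1 + b) * ln (1 + b))) by nra.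
  apply Rmult_lt_reg_r with (a * b); [nra |].
  replace ((1 + a) * ln (1 + a) / a * (a * b)) with (b * ((1 + a) * ln (1 + a))) by (field; lra).
  replace ((1 + b) * ln (1 + b) / b * (a * b)) with (a * ((1 + b) * ln (1 + b))) by (field; lra).
  exact Hcross.
Qed.

Lemma flip_below z k kstar : 0 < k -> k < kstar -> flip_eq z kstar ->
  (1 + k) * ln (1 + k) < z ^ 2 * k.
Proof.
  unfold flip_eq. intros Hk Hks Hflip.
  pose proof (xlnx_1p_div_increasing k kstar Hk Hks) as H.
  rewrite Hflip in H.
  replace (z ^ 2 * kstar / kstar) with (z ^ 2) in H by (field; lra).
  apply Rmult_lt_reg_r with (/ k); [apply Rinv_0_lt_compat; lra |].
  replace (z ^ 2 * k * / k) with (z ^ 2) by (field; lra).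
  exact H.
Qed.

Lemma flip_above z k kstar : 0 < kstar -> kstar < k -> flip_eq z kstar ->
  z ^ 2 * k < (1 + k) * ln (1 + k).
Proof.
  unfold flip_eq. intros Hks Hk Hflip.
  pose proof (xlnx_1p_div_increasing kstar k Hks Hk) as H.
  rewrite Hflip in H.
  replace (z ^ 2 * kstar / kstar) with (z ^ 2) in H by (field; lra).
  apply Rmult_lt_reg_r with (/ k); [apply Rinv_0_lt_compat; lra |].
  replace (z ^ 2 * k * / k) with (z ^ 2) by (field; lra).
  exact H.
Qed.

Lemma BF01_rescaled n xbar k : (1 <= n)%nat -> 0 < k ->
  BF01 n xbar (k / INR n) =
  exp (((1 + k) * ln (1 + k) - zstat n xbar ^ 2 * k) / (2 * (1 + k))).
Proof.
  intros Hn Hk.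
  assert (HN : 0 < INR n) by (apply lt_0_INR; lia).
  unfold BF01.
  replace (INR n * (k / INR n)) with k by (field; lra).
  rewrite <- Rpower_sqrt by lra. unfold Rpower.
  rewrite <- exp_plus. f_equal. field. lra.
Qed.

Lemma BF01_lt_1 n xbar k : (1 <= n)%nat -> 0 < k ->
  (1 + k) * ln (1 + k) < zstat n xbar ^ 2 * k -> BF01 n xbar (k / INR n) < 1.
Proof.
  intros Hn Hk H.
  rewrite BF01_rescaled by assumption.
  apply Rlt_le_trans with (exp 0); [| rewrite exp_0; lra].
  apply exp_increasing, Rdiv_neg_pos; lra.
Qed.

Lemma BF01_gt_1 n xbar k : (1 <= n)%nat -> 0 < k ->
  zstat n xbar ^ 2 * k < (1 + k) * ln (1 + k) -> BF01 n xbar (k / INR n) > 1.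
Proof.
  intros Hn Hk H.
  rewrite BF01_rescaled by assumption.
  apply Rlt_gt, Rle_lt_trans with (exp 0); [rewrite exp_0; lra |].
  apply exp_increasing, Rdiv_lt_0_compat; lra.
Qed.

Theorem theorem2 (n : nat) (xbar kstar : R) :
  (1 <= n)%nat ->
  Rabs (zstat n xbar) > 196 / 100 ->
  0 < kstar ->
  flip_eq (zstat n xbar) kstar ->
  (forall k, 0 < k -> flip_eq (zstat n xbar) k -> k = kstar) ->
  exists tau1 tau2 : R,
    0 < tau1 /\ tau1 < kstar / INR n /\ kstar / INR n < tau2 /\
    BF01 n xbar tau1 < 1 /\ BF01 n xbar tau2 > 1.
Proof.
  (* Significance only ensures that [kstar] exists, and uniqueness follows from
     monotonicity. *)
  intros Hn _ Hks Hflip _.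
  assert (HN : 0 < / INR n) by (apply Rinv_0_lt_compat, lt_0_INR; lia).
  exists ((kstar / 2) / INR n), ((2 * kstar) / INR n).
  unfold Rdiv at 1 2 3 4.
  repeat split.
  - nra.
  - apply Rmult_lt_compat_r; lra.
  - apply Rmult_lt_compat_r; lra.
  - apply BF01_lt_1, flip_below with (kstar := kstar); auto; lra.
  - apply BF01_gt_1, flip_above with (kstar := kstar); auto; lra.
Qed.
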